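(* Let $\mathcal H=(\mathcal V,\mathcal E)$ be a hypergraph and $\vec x$ an optimal solution to the LP $\max\{\sum_ew_ex_e:\sum_{e\ni v}x_e\le1\ \forall v\in\mathcal V,\ \vec x\in[0,1]^{\mathcal E}\}$. Run the algorithm $\mathrm{HM}(\alpha)$ described in the context with $\alpha=1$. Then each edge $e$ is added to the output matching with probability at least $\frac{x_e}{k_e+1+o(k_e)}$, where $k_e=|e|$.
   Context: Algorithm $\mathrm{HM}(\alpha)$: for each edge $e$ generate an independent Bernoulli random variable $Y_e$ with mean $\alpha x_e$; assign to each edge an independent uniformly random number in $[0,1]$ and consider the edges in increasing order of these numbers; when considering $e$, add $e$ to the matching $\mathcal R$ iff $Y_e=1$ and $e$ is safe (no vertex of $e$ is already covered by an edge in $\mathcal R$); return $\mathcal R$. *)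

From mathcomp Require Import all_boot all_order all_algebra all_fingroup.
Set Implicit Arguments. Unset Strict Implicit. Unset Printing Implicit Defensive.
Import Order.TTheory GRing.Theory Num.Theory.
Local Open Scope ring_scope.

(* A hypergraph with vertex type V and edge type E (parallel edges allowed):
   inc e is the set of vertices of edge e. *)

Section HM.
Variables (R : realFieldType) (V E : finType) (inc : E -> {set V}).

Definition lp_feasible (x : E -> R) : Prop :=
  (forall e, 0 <= x e <= 1) /\
  (forall v : V, \sum_(e | v \in inc e) x e <= 1).

Definition lp_optimal (w x : E -> R) : Prop :=
  lp_feasible x /\
  forall y, lp_feasible y -> \sum_e w e * y e <= \sum_e w e * x e.

Definition safe (Rm : {set E}) (e : E) : bool :=
  [forall f in Rm, [disjoint inc f & inc e]].

Definition HM_run (s : seq E) (Y : {ffun E -> bool}) : {set E} :=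
  foldl (fun Rm e => if Y e && safe Rm e then e |: Rm else Rm) set0 s.

Definition perm_order (sigma : {perm E}) : seq E := [seq sigma i | i <- enum E].

Definition coin_prob (alpha : R) (x : E -> R) (Y : {ffun E -> bool}) : R :=
  \prod_f (if Y f then alpha * x f else 1 - alpha * x f).

(* Probability that HM(alpha) puts e in the output matching. The order given
   by i.i.d. uniform [0,1] labels is (a.s.) a uniformly random permutation. *)
Definition HM_prob (alpha : R) (x : E -> R) (e : E) : R :=
  \sum_(sigma : {perm E}) \sum_(Y : {ffun E -> bool})
     (#|{perm E}|%:R)^-1 * coin_prob alpha x Y *
     (e \in HM_run (perm_order sigma) Y)%:R.

End HM.

Definition little_o_id (R : realFieldType) (g : nat -> R) : Prop :=
  forall eps : R, 0 < eps -> exists N : nat, forall k : nat, (N <= k)%N ->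
    `|g k| <= eps * k%:R.

From mathcomp Require Import all_boot all_order all_algebra all_fingroup.
From mathcomp Require Import ring lra.

Set Implicit Arguments.
Unset Strict Implicit.
Unset Printing Implicit Defensive.

Import Order.TTheory GRing.Theory Num.Theory.

(* The bound holds with o(k_e) replaced by 0.  Fix the coins Y.  If Y_e = 1,
   then e enters the matching as soon as it comes first, in the random order,
   among T = {e} together with the neighbours f of e with Y_f = 1; by symmetry
   this happens with probability 1/|T| = 1/(1 + N), where N counts those
   neighbours.  Bounding 1/(1 + N) from below by its tangent line at N = k_e
   gives a bound linear in N, whose expectation against Y_e is
   x_e (1 + 2 k_e - sum_f x_f) / (1 + k_e)^2, and the LP constraints at the
   k_e vertices of e give sum_f x_f <= k_e. *)

Section HMRun.
Variables (V E : finType) (inc : E -> {set V}) (Y : {ffun E -> bool}).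

Let HM_step Rm e := if Y e && safe inc Rm e then e |: Rm else Rm.

Lemma subset_foldl_HM_step (s : seq E) (Rm : {set E}) :
  Rm \subset foldl HM_step Rm s.
Proof.
elim: s Rm => [|f s IHs] Rm /=; first exact: subxx.
apply: subset_trans (IHs _); rewrite /HM_step.
by case: ifP => _; [exact: subsetU1 | exact: subxx].
Qed.

Lemma mem_foldl_HM_step (s : seq E) (Rm : {set E}) f :
  f \in foldl HM_step Rm s -> (f \in Rm) || (f \in s) && Y f.
Proof.
elim: s Rm => [|g s IHs] Rm /=; first by move->.
move=> /IHs; rewrite /HM_step in_cons; case: ifP => [/andP[Yg _]|_].
  rewrite in_setU1; case/orP => [/orP[/eqP-> | ->] | /andP[-> ->]];
  by rewrite ?eqxx ?Yg ?orbT.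
by case/orP => [-> // | /andP[-> ->]]; rewrite !orbT.
Qed.

Lemma mem_HM_run (s : seq E) e : Y e -> e \in s ->
  (forall f, f \in take (index e s) s -> Y f -> [disjoint inc f & inc e]) ->
  e \in HM_run inc s Y.
Proof.
move=> Ye es disj_before.
rewrite /HM_run -(cat_take_drop (index e s) s) foldl_cat.
rewrite (drop_nth e) ?index_mem // nth_index //=.
set Rm := foldl _ set0 _.
have safe_e : safe inc Rm e.
  by apply/forall_inP => f /mem_foldl_HM_step; rewrite in_set0 => /andP[];
     exact: disj_before.
apply: subsetP (subset_foldl_HM_step _ _) _ _.
by rewrite /HM_step Ye safe_e setU11.
Qed.

End HMRun.

Section FirstInOrder.
Variable E : finType.

Definition perm_rank (s : {perm E}) (f : E) : nat := index f (perm_order s).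

Definition first_in (s : {perm E}) (T : {set E}) (e : E) : bool :=
  [forall f in T, (f != e) ==> (perm_rank s e < perm_rank s f)%N].

Lemma mem_perm_order (s : {perm E}) f : f \in perm_order s.
Proof. by rewrite -{1}(permKV s f) map_f ?mem_enum. Qed.

Lemma perm_rank_inj (s : {perm E}) : injective (perm_rank s).
Proof.
move=> f g /(congr1 (nth f (perm_order s))).
by rewrite !nth_index ?mem_perm_order.
Qed.

Lemma perm_rankM (s t : {perm E}) f : perm_rank (s * t) f = perm_rank s ((t^-1)%g f).
Proof.
rewrite /perm_rank /perm_order -[in LHS](permKV t f).
have -> : [seq (s * t)%g i | i <- enum E] = map t [seq s i | i <- enum E].
  by rewrite -map_comp; apply: eq_map => i; rewrite /= permM.
by rewrite index_map //; exact: perm_inj.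
Qed.

Lemma exists_first_in (s : {perm E}) (T : {set E}) e :
  e \in T -> exists2 f, f \in T & first_in s T f.
Proof.
move=> eT; case: (arg_minnP (perm_rank s) eT) => f fT f_min.
exists f => //; apply/forall_inP => g gT; apply/implyP => gf.
rewrite ltn_neqAle f_min // andbT; apply: contra gf => /eqP eq_rank.
by rewrite (perm_rank_inj eq_rank).
Qed.

Lemma first_inM_tperm (s : {perm E}) (T : {set E}) e f : e \in T -> f \in T ->
  first_in (s * tperm e f) T f = first_in s T e.
Proof.
move=> eT fT; rewrite /first_in.
have tpermT g : (tperm e f g \in T) = (g \in T).
  by case: tpermP => [->|->|]; rewrite ?eT ?fT.
have neq_tperm g h : (tperm e f g != h) = (g != tperm e f h).
  by rewrite -{1}(tpermK e f h) (inj_eq (@perm_inj _ _)).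
apply/forall_inP/forall_inP => first_f g gT.
  have := first_f (tperm e f g); rewrite tpermT => /(_ gT).
  by rewrite !perm_rankM tpermV tpermK tpermR neq_tperm tpermR.
have := first_f (tperm e f g); rewrite tpermT => /(_ gT).
by rewrite !perm_rankM tpermV tpermR neq_tperm tpermL.
Qed.

(* Right multiplication by tperm e f is a bijection of {perm E} exchanging the
   permutations where e comes first in T with those where f does. *)
Lemma card_perm_le_first_in (T : {set E}) e : e \in T ->
  (#|{perm E}| <= #|T| * \sum_(s : {perm E}) first_in s T e)%N.
Proof.
move=> eT.
have same_count f : f \in T ->
    (\sum_(s : {perm E}) first_in s T f = \sum_(s : {perm E}) first_in s T e)%N.
  move=> fT; rewrite (reindex_inj (mulIg (tperm e f))) /=.
  by apply: eq_bigr => s _; rewrite first_inM_tperm.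
rewrite -sum_nat_const -(eq_bigr _ same_count) exchange_big -sum1_card /=.
apply: leq_sum => s _; case: (exists_first_in s eT) => f fT first_f.
by rewrite (bigD1 f) //= first_f.
Qed.

End FirstInOrder.

Local Open Scope ring_scope.

Lemma invr1D_ge_tangent (R : realFieldType) (t k : R) : 0 <= t -> 0 <= k ->
  (1 + 2 * k - t) / (1 + k) ^+ 2 <= (1 + t)^-1.
Proof.
move=> t0 k0.
rewrite ler_pdivrMr ?exprn_gt0 ?ltr_wpDr // [X in _ <= X]mulrC ler_pdivlMr ?ltr_wpDr //.
have : 0 <= (k - t) ^+ 2 by exact: sqr_ge0.
by rewrite !expr2; nra.
Qed.

Section Coins.
Variables (R : realFieldType) (E : finType) (x : E -> R).

Lemma coin_prob_ge0 Y : (forall f, 0 <= x f <= 1) -> 0 <= coin_prob 1 x Y.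
Proof.
move=> x01; apply: prodr_ge0 => f _; rewrite mul1r; have /andP[x0 x1] := x01 f.
by case: (Y f); rewrite ?subr_ge0.
Qed.

Lemma coin_prob_prod (S : {set E}) :
  \sum_(Y : {ffun E -> bool}) coin_prob 1 x Y * \prod_(f in S) ((Y f)%:R : R)
  = \prod_(f in S) x f.
Proof.
pose G f (b : bool) : R :=
  (if b then x f else 1 - x f) * (if f \in S then b%:R else 1).
have coinG Y : coin_prob 1 x Y * \prod_(f in S) ((Y f)%:R : R) = \prod_f G f (Y f).
  rewrite /coin_prob (big_mkcond (fun f => f \in S)) -big_split /=.
  by apply: eq_bigr => f _; rewrite mul1r.
rewrite (eq_bigr _ (fun Y _ => coinG Y)) -(bigA_distr_bigA G) [RHS]big_mkcond /=.
apply: eq_bigr => f _; rewrite big_bool /G /=.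
by case: (f \in S); rewrite ?mulr1 ?mulr0 ?addr0 // addrC subrK.
Qed.

Lemma coin_prob_mean e :
  \sum_(Y : {ffun E -> bool}) coin_prob 1 x Y * (Y e)%:R = x e.
Proof.
have := coin_prob_prod [set e]; rewrite big_set1 => <-.
by apply: eq_bigr => Y _; rewrite big_set1.
Qed.

Lemma coin_prob_mean_pair e f : f != e ->
  \sum_(Y : {ffun E -> bool}) coin_prob 1 x Y * ((Y e)%:R * (Y f)%:R) = x e * x f.
Proof.
move=> fe; have e_notin_f : e \notin [set f] by rewrite inE eq_sym.
have := coin_prob_prod (e |: [set f]); rewrite big_setU1 //= big_set1 => <-.
by apply: eq_bigr => Y _; rewrite big_setU1 //= big_set1.
Qed.

End Coins.

Section OneEdge.
Variables (R : realFieldType) (V E : finType) (inc : E -> {set V}) (x : E -> R).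
Variable e : E.

Let nbrs := [set f | (f != e) && ~~ [disjoint inc f & inc e]].
Let nbrs_up (Y : {ffun E -> bool}) := e |: [set f in nbrs | Y f].
Let N (Y : {ffun E -> bool}) : R := \sum_(f in nbrs) (Y f)%:R.

Lemma sum_nbrs_le : lp_feasible inc x -> \sum_(f in nbrs) x f <= #|inc e|%:R.
Proof.
case=> x01 load_le1; have x0 f : 0 <= x f by case/andP: (x01 f).
apply: (@le_trans _ _ (\sum_(f in nbrs) \sum_(v in inc e) (v \in inc f)%:R * x f)).
  apply: ler_sum => f; rewrite inE => /andP[_ /pred0Pn[v /andP[vf ve]]].
  have {}vf : v \in inc f := vf.
  rewrite (bigD1 v) //= vf mul1r lerDl.
  by apply: sumr_ge0 => u _; rewrite mulr_ge0.
rewrite exchange_big -sum1_card natr_sum; apply: ler_sum => v _.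
apply: le_trans (load_le1 v); rewrite [X in _ <= X]big_mkcond /=.
apply: (@le_trans _ _ (\sum_f (v \in inc f)%:R * x f)); last first.
  by apply: ler_sum => f _; case: ifP; rewrite ?mul1r ?mul0r.
by rewrite [X in _ <= X](bigID (mem nbrs)) lerDl sumr_ge0 // => f _; rewrite mulr_ge0.
Qed.

Lemma first_in_HM_run (Y : {ffun E -> bool}) (s : {perm E}) :
  Y e -> first_in s (nbrs_up Y) e -> e \in HM_run inc (perm_order s) Y.
Proof.
move=> Ye first_e; apply: mem_HM_run (mem_perm_order s e) _ => // f f_before Yf.
have rank_f := index_ltn f_before.
apply: contraT => meet_f.
have fe : f != e by apply: contraTneq rank_f => ->; rewrite ltnn.
have /forall_inP/(_ f) := first_e; rewrite !inE fe meet_f Yf orbT => /(_ isT).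
by rewrite /perm_rank ltnNge ltnW.
Qed.

Lemma card_nbrs_up (Y : {ffun E -> bool}) : #|nbrs_up Y|%:R = 1 + N Y.
Proof.
rewrite cardsU1 !inE eqxx /= natrD -sum1_card natr_sum; congr (_ + _).
rewrite big_mkcond [RHS]big_mkcond /=; apply: eq_bigr => f _.
by rewrite !inE; case: (Y f); rewrite ?andbT ?andbF; case: ifP.
Qed.

Lemma HM_run_prob_ge (Y : {ffun E -> bool}) : Y e ->
  (1 + N Y)^-1 <=
  (#|{perm E}|%:R)^-1 * \sum_(s : {perm E}) (e \in HM_run inc (perm_order s) Y)%:R.
Proof.
move=> Ye; rewrite -card_nbrs_up.
have perms_gt0 : (0 < #|{perm E}|)%N by apply/card_gt0P; exists 1%g.
have e_up : e \in nbrs_up Y := setU11 _ _.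
have up_gt0 : (0 < #|nbrs_up Y|)%N by apply/card_gt0P; exists e.
rewrite -natr_sum mulrC ler_pdivlMr ?ltr0n // mulrC ler_pdivrMr ?ltr0n //.
rewrite -natrM ler_nat; apply: leq_trans (card_perm_le_first_in e_up) _.
rewrite mulnC leq_mul2r; apply/orP; right.
apply: leq_sum => s _; have := first_in_HM_run (s := s) Ye.
by case: first_in => // /(_ isT) ->.
Qed.

Lemma HM_probE :
  HM_prob inc 1 x e = \sum_(Y : {ffun E -> bool}) coin_prob 1 x Y *
    ((#|{perm E}|%:R)^-1 * \sum_(s : {perm E}) (e \in HM_run inc (perm_order s) Y)%:R).
Proof.
rewrite /HM_prob exchange_big; apply: eq_bigr => Y _; rewrite !mulr_sumr.
by apply: eq_bigr => s _; rewrite mulrA [_^-1 * _]mulrC.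
Qed.

Lemma coin_prob_tangent_mean (k c : R) :
  \sum_(Y : {ffun E -> bool}) coin_prob 1 x Y * ((Y e)%:R * (1 + 2 * k - N Y) / c)
  = x e * (1 + 2 * k - \sum_(f in nbrs) x f) / c.
Proof.
have expand Y : coin_prob 1 x Y * ((Y e)%:R * (1 + 2 * k - N Y) / c) =
    ((1 + 2 * k) * (coin_prob 1 x Y * (Y e)%:R)
     - \sum_(f in nbrs) coin_prob 1 x Y * ((Y e)%:R * (Y f)%:R)) / c.
  have -> : \sum_(f in nbrs) coin_prob 1 x Y * ((Y e)%:R * (Y f)%:R) =
      coin_prob 1 x Y * (Y e)%:R * N Y.
    by rewrite /N mulr_sumr; apply: eq_bigr => f _; rewrite mulrA.
  ring.
rewrite (eq_bigr _ (fun Y _ => expand Y)) -mulr_suml sumrB -mulr_sumr exchange_big /=.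
rewrite coin_prob_mean (eq_bigr (fun f => x e * x f)); last first.
  by move=> f; rewrite inE => /andP[fe _]; exact: coin_prob_mean_pair.
by rewrite -mulr_sumr; congr (_ / c); ring.
Qed.

Lemma HM_prob_ge : lp_feasible inc x -> x e / #|inc e|.+1%:R <= HM_prob inc 1 x e.
Proof.
move=> feas_x; have x0 f : 0 <= x f by case/andP: (feas_x.1 f).
set k : R := #|inc e|%:R; have k0 : 0 <= k by rewrite ler0n.
set c : R := (1 + k) ^+ 2; have c_gt0 : 0 < c by rewrite exprn_gt0 ?ltr_wpDr.
apply: (@le_trans _ _ (x e * (1 + 2 * k - \sum_(f in nbrs) x f) / c)).
  rewrite -nat1r -/k ler_pdivrMr ?ltr_wpDr // mulrAC ler_pdivlMr //.
  have : x e * \sum_(f in nbrs) x f <= x e * k by rewrite ler_wpM2l ?sum_nbrs_le.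
  by rewrite /c expr2; nra.
rewrite -coin_prob_tangent_mean HM_probE; apply: ler_sum => Y _.
apply: ler_wpM2l; first exact: coin_prob_ge0 feas_x.1.
case Ye: (Y e); last first.
  by rewrite !mul0r mulr_ge0 ?invr_ge0 ?ler0n ?sumr_ge0 // => s _; rewrite ler0n.
rewrite mul1r; apply: le_trans (HM_run_prob_ge Ye).
by apply: invr1D_ge_tangent; rewrite ?sumr_ge0 // => f _; rewrite ler0n.
Qed.

End OneEdge.

Theorem lemma7 (R : realFieldType) :
  exists g : nat -> R,
    little_o_id g /\ (forall k : nat, 0 < k.+1%:R + g k) /\
    forall (V E : finType) (inc : E -> {set V}) (w x : E -> R),
      lp_optimal inc w x ->
      forall e : E,
        x e / ((#|inc e|).+1%:R + g #|inc e|) <= HM_prob inc 1 x e.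
Proof.
exists (fun _ => 0); split; last split.
- by move=> eps eps_gt0; exists 0%N => k _; rewrite normr0 mulr_ge0 ?ler0n ?ltW.
- by move=> k; rewrite addr0 ltr0n.
- by move=> V E inc w x [feas_x _] e; rewrite addr0; exact: HM_prob_ge.
Qed.
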